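(* Let $a,b,c\in\mathbb{R}$ and $f(x)=x^3+ax^2+bx+c$. Then $f(x)\ge0$ for all $x\ge0$ if and only if one of the following holds: (1) $a\ge0$, $b\ge0$ and $c\ge0$; (2) $c=0$ and $a^2-4b\le0$; (3) $c>0$ and $a^2b^2-4b^3-4a^3c+18abc-27c^2\le0$. *)

From Stdlib Require Import Reals.
Open Scope R_scope.

Definition cubic (a b c x : R) : R := x ^ 3 + a * x ^ 2 + b * x + c.

From Stdlib Require Import Reals Lra Psatz.
Open Scope R_scope.

(* Substituting y = x + a/3 turns f into the depressed cubic
   g(y) = y^3 - 3 p y + q, and the discriminant of f into 27 (4 p^3 - q^2);
   the half-line x >= 0 becomes y >= a/3, where g(a/3) = c.  If p <= 0 then g
   is increasing.  If p = m^2 > 0, g increases on (-oo, -m] and [m, +oo) with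
   local extrema g(-m) = q + 2 m^3 and g(m) = q - 2 m^3; the condition
   q^2 >= 4 m^6 says these have the same sign, so a cubic positive at some
   point stays nonnegative to its right.  Conversely, if f >= 0 on x >= 0 and
   the local minimum y = m lies in the half-line, then q >= 2 m^3; otherwise
   a > 3 m, which forces a, b >= 0.  When c = 0 the problem is quadratic. *)

Definition depressed_cubic (p q y : R) : R := y ^ 3 - 3 * p * y + q.

Definition cubic_discriminant (a b c : R) : R :=
  a ^ 2 * b ^ 2 - 4 * b ^ 3 - 4 * a ^ 3 * c + 18 * a * b * c - 27 * c ^ 2.

Lemma depressed_cubic_le (p q y0 y : R) :
  y0 <= y -> 3 * p <= y0 ^ 2 + y0 * y + y ^ 2 ->
  depressed_cubic p q y0 <= depressed_cubic p q y.
Proof.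
  intros hy hp.
  assert (E : depressed_cubic p q y - depressed_cubic p q y0
              = (y - y0) * (y0 ^ 2 + y0 * y + y ^ 2 - 3 * p))
    by (unfold depressed_cubic; ring).
  assert (0 <= (y - y0) * (y0 ^ 2 + y0 * y + y ^ 2 - 3 * p))
    by (apply Rmult_le_pos; lra).
  lra.
Qed.

Lemma depressed_cubic_local_min (m q y : R) :
  depressed_cubic (m ^ 2) q y = (y - m) ^ 2 * (y + 2 * m) + (q - 2 * m ^ 3).
Proof. unfold depressed_cubic; ring. Qed.

Lemma depressed_cubic_local_max (m q y : R) :
  depressed_cubic (m ^ 2) q y = (y + m) ^ 2 * (y - 2 * m) + (q + 2 * m ^ 3).
Proof. unfold depressed_cubic; ring. Qed.

Lemma depressed_cubic_sqr_nonneg_right (m q y0 y : R) :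
  0 < m -> 4 * m ^ 6 <= q ^ 2 -> 0 < depressed_cubic (m ^ 2) q y0 -> y0 <= y ->
  0 <= depressed_cubic (m ^ 2) q y.
Proof.
  intros hm hq hy0 hy.
  assert (hm3 : 0 < m ^ 3) by (apply pow_lt; lra).
  assert (hle : forall u v, u <= v -> (v <= - m \/ m <= u) ->
            depressed_cubic (m ^ 2) q u <= depressed_cubic (m ^ 2) q v)
    by (intros u v huv hs; apply depressed_cubic_le; [exact huv | nra]).
  destruct (Rle_or_lt (2 * m ^ 3) q) as [hq_pos | hq_lt].
  - destruct (Rle_or_lt (- 2 * m) y) as [hy_right | hy_left].
    + rewrite depressed_cubic_local_min.
      assert (0 <= (y - m) ^ 2 * (y + 2 * m))
        by (apply Rmult_le_pos; [apply pow2_ge_0 | lra]).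
      lra.
    + assert (depressed_cubic (m ^ 2) q y0 <= depressed_cubic (m ^ 2) q y)
        by (apply hle; lra).
      lra.
  - assert (hq_neg : q <= - 2 * m ^ 3) by nra.
    assert (hy0_right : 2 * m < y0).
    { destruct (Rlt_or_le (2 * m) y0) as [h | h]; [exact h |].
      rewrite depressed_cubic_local_max in hy0.
      assert (0 <= (y0 + m) ^ 2 * (2 * m - y0))
        by (apply Rmult_le_pos; [apply pow2_ge_0 | lra]).
      lra. }
    assert (depressed_cubic (m ^ 2) q y0 <= depressed_cubic (m ^ 2) q y)
      by (apply hle; lra).
    lra.
Qed.

Lemma depressed_cubic_nonneg_right (p q y0 y : R) :
  4 * p ^ 3 <= q ^ 2 -> 0 < depressed_cubic p q y0 -> y0 <= y ->
  0 <= depressed_cubic p q y.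
Proof.
  intros hq hy0 hy.
  destruct (Rle_or_lt p 0) as [hp | hp].
  - assert (depressed_cubic p q y0 <= depressed_cubic p q y)
      by (apply depressed_cubic_le; nra).
    lra.
  - assert (hm : sqrt p ^ 2 = p) by (apply pow2_sqrt; lra).
    rewrite <- hm in *.
    apply depressed_cubic_sqr_nonneg_right with y0;
      [apply sqrt_lt_R0; lra | | exact hy0 | exact hy].
    replace (sqrt p ^ 6) with ((sqrt p ^ 2) ^ 3) by ring.
    exact hq.
Qed.

Lemma cubic_shift (a b c x : R) :
  cubic a b c x =
  depressed_cubic ((a ^ 2 - 3 * b) / 9) (2 * a ^ 3 / 27 - a * b / 3 + c) (x + a / 3).
Proof. unfold cubic, depressed_cubic; field. Qed.

Lemma cubic_discriminant_shift (a b c : R) :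
  cubic_discriminant a b c =
  27 * (4 * ((a ^ 2 - 3 * b) / 9) ^ 3 - (2 * a ^ 3 / 27 - a * b / 3 + c) ^ 2).
Proof. unfold cubic_discriminant; field. Qed.

Lemma quadratic_nonneg_pos_iff (a b : R) :
  (forall x, 0 < x -> 0 <= x ^ 2 + a * x + b) <->
  ((0 <= a /\ 0 <= b) \/ a ^ 2 - 4 * b <= 0).
Proof.
  split.
  - intros H.
    destruct (Rle_or_lt 0 a) as [ha | ha].
    + destruct (Rle_or_lt 0 b) as [hb | hb]; [left; lra | exfalso].
      (* At x = -b/(a+1-b) in (0,1): x^2 + a x + b < x (a+1) + b = -b^2/(a+1-b). *)
      set (x := - b / (a + 1 - b)).
      assert (hx0 : 0 < x) by (apply Rdiv_lt_0_compat; lra).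
      assert (hx1 : x < 1)
        by (apply Rmult_lt_reg_r with (a + 1 - b); [lra |];
            unfold x; field_simplify; lra).
      assert (hval : x * (a + 1) + b = - b ^ 2 / (a + 1 - b))
        by (unfold x; field; lra).
      assert (0 < b ^ 2 / (a + 1 - b)) by (apply Rdiv_lt_0_compat; nra).
      specialize (H x hx0).
      nra.
    + right.
      assert (hx : 0 < - a / 2) by lra.
      specialize (H _ hx).
      lra.
  - intros [[ha hb] | hd] x hx.
    + nra.
    + assert (E : x ^ 2 + a * x + b = (x + a / 2) ^ 2 - (a ^ 2 - 4 * b) / 4)
        by field.
      rewrite E.
      assert (0 <= (x + a / 2) ^ 2) by apply pow2_ge_0.
      lra.
Qed.

Lemma cubic_nonneg_const0_iff (a b : R) :
  (forall x, 0 <= x -> 0 <= cubic a b 0 x) <->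
  ((0 <= a /\ 0 <= b) \/ a ^ 2 - 4 * b <= 0).
Proof.
  rewrite <- quadratic_nonneg_pos_iff.
  assert (E : forall x, cubic a b 0 x = x * (x ^ 2 + a * x + b))
    by (intros; unfold cubic; ring).
  split; intros H x hx.
  - specialize (H x (Rlt_le _ _ hx)).
    rewrite E in H.
    nra.
  - rewrite E.
    destruct (Rle_lt_or_eq_dec _ _ hx) as [hx' | <-].
    + apply Rmult_le_pos; [lra | exact (H x hx')].
    + lra.
Qed.

Lemma cubic_nonneg_const_pos_iff (a b c : R) :
  0 < c ->
  (forall x, 0 <= x -> 0 <= cubic a b c x) <->
  ((0 <= a /\ 0 <= b) \/ cubic_discriminant a b c <= 0).
Proof.
  intros hc.
  rewrite cubic_discriminant_shift.
  set (p := (a ^ 2 - 3 * b) / 9).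
  set (q := 2 * a ^ 3 / 27 - a * b / 3 + c).
  assert (hg : forall x, cubic a b c x = depressed_cubic p q (x + a / 3))
    by (intros; apply cubic_shift).
  split.
  - intros H.
    destruct (Rle_or_lt p 0) as [hp | hp].
    + right.
      assert (p ^ 3 <= 0) by nra.
      assert (0 <= q ^ 2) by apply pow2_ge_0.
      lra.
    + set (m := sqrt p).
      assert (hm : m ^ 2 = p) by (apply pow2_sqrt; lra).
      assert (hm0 : 0 < m) by (apply sqrt_lt_R0; lra).
      destruct (Rle_or_lt (a / 3) m) as [hmin | hmin].
      * right.
        assert (hx : 0 <= m - a / 3) by lra.
        specialize (H _ hx).
        rewrite hg, <- hm, depressed_cubic_local_min in H.
        replace (m - a / 3 + a / 3) with m in H by ring.
        assert (hq : 2 * m ^ 3 <= q) by lra.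
        assert (0 <= m ^ 3) by (apply pow_le; lra).
        rewrite <- hm.
        nra.
      * left.
        assert (hb : b = (a ^ 2 - 9 * m ^ 2) / 3) by (rewrite hm; unfold p; field).
        split; [lra |].
        rewrite hb.
        nra.
  - intros [[ha hb] | hd] x hx.
    + unfold cubic.
      assert (0 <= x ^ 3) by (apply pow_le; lra).
      assert (0 <= a * x ^ 2) by (apply Rmult_le_pos; [lra | apply pow2_ge_0]).
      assert (0 <= b * x) by (apply Rmult_le_pos; lra).
      lra.
    + rewrite hg.
      apply depressed_cubic_nonneg_right with (a / 3); [lra | | lra].
      rewrite <- (Rplus_0_l (a / 3)), <- hg.
      unfold cubic; lra.
Qed.

Theorem lemma4p9 (a b c : R) :
  (forall x : R, 0 <= x -> 0 <= cubic a b c x) <->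
  ((0 <= a /\ 0 <= b /\ 0 <= c) \/
   (c = 0 /\ a ^ 2 - 4 * b <= 0) \/
   (0 < c /\ a ^ 2 * b ^ 2 - 4 * b ^ 3 - 4 * a ^ 3 * c + 18 * a * b * c - 27 * c ^ 2 <= 0)).
Proof.
  fold (cubic_discriminant a b c).
  destruct (Rtotal_order c 0) as [hc | [-> | hc]].
  - split.
    + intros H.
      specialize (H 0 (Rle_refl 0)).
      unfold cubic in H.
      lra.
    + intros [[_ [_ hc']] | [[hc' _] | [hc' _]]]; lra.
  - rewrite cubic_nonneg_const0_iff.
    split.
    + intros [[ha hb] | hd]; [left | right; left]; repeat split; lra.
    + intros [[ha [hb _]] | [[_ hd] | [hc _]]]; [left | right | lra]; lra.
  - rewrite (cubic_nonneg_const_pos_iff a b c hc).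
    split.
    + intros [[ha hb] | hd]; [left | right; right]; repeat split; lra.
    + intros [[ha [hb _]] | [[hc' _] | [_ hd]]]; [left | lra | right]; lra.
Qed.
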